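(* Assume $\mathrm{int}\,D\cap\mathrm{int}\{x\in\mathbb{R}^n:Ax\in C\}\neq\emptyset$. Then: (i) $x^\star\in\mathbb{R}^n$ is a stationary point of problem (P) if and only if $x^\star\in D$, $Ax^\star\in C$ and $$0\in\partial(\|\cdot\|_1+\iota_D)(x^\star)-\frac{\|x^\star\|_1}{\|x^\star\|_2}\nabla\|\cdot\|_2(x^\star)+\partial(\iota_C\circ A)(x^\star);$$ (ii) for $\lambda>0$, $x^\star\in\mathbb{R}^n$ is a stationary point of problem (P$_\lambda$) if and only if $0_n\ne x^\star\in D$ and $$0\in\lambda\,\partial(\|\cdot\|_1+\iota_D)(x^\star)-Q_\lambda(x^\star)\nabla\|\cdot\|_2(x^\star)+\nabla(\mathrm{env}\circ A)(x^\star).$$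
   Context: Let $A\in\mathbb{R}^{m\times n}$, $b\in\mathbb{R}^m$, $\epsilon\ge0$ with $\|b\|_2>\epsilon$, $d>0$. $C:=\{y\in\mathbb{R}^m:\|y-b\|_2\le\epsilon\}$, $D:=\{x\in\mathbb{R}^n:\|x\|_2\le d\}$; $\iota_S$ denotes the indicator function of a set $S$ ($0$ on $S$, $+\infty$ off $S$). $\mathrm{env}(y):=\frac12((\|y-b\|_2-\epsilon)_+)^2$, which is convex and differentiable with $\nabla(\mathrm{env}\circ A)(x)=\frac{(\|Ax-b\|_2-\epsilon)_+}{\|Ax-b\|_2}A^T(Ax-b)$ (interpreted as $0_n$ when $\|Ax-b\|_2\le\epsilon$). $Q_\lambda(x):=(\lambda\|x\|_1+\mathrm{env}(Ax))/\|x\|_2$ on $D\setminus\{0_n\}$, $+\infty$ elsewhere. Problem (P): minimize $\|x\|_1/\|x\|_2$ subject to $\|Ax-b\|_2\le\epsilon$, $\|x\|_2\le d$; its extended objective is $\Phi(x):=\|x\|_1/\|x\|_2+\iota_D(x)+\iota_C(Ax)$ for $x\ne0_n$, $\Phi(0_n)=+\infty$. Problem (P$_\lambda$): minimize $Q_\lambda$ over $\mathbb{R}^n$. For a proper $\varphi:\mathbb{R}^n\to(-\infty,+\infty]$ and $x\in\mathrm{dom}\,\varphi$, the Fréchet subdifferential is $\hat\partial\varphi(x):=\{v:\liminf_{z\to x,z\ne x}\frac{\varphi(z)-\varphi(x)-\langle v,z-x\rangle}{\|z-x\|_2}\ge0\}$. A point $x^\star$ is a stationary point of (P) (resp. (P$_\lambda$))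 if $0\in\hat\partial\Phi(x^\star)$ (resp. $0\in\hat\partial Q_\lambda(x^\star)$). For convex functions $\partial$ denotes the usual convex subdifferential. *)

From mathcomp Require Import all_boot all_order all_algebra.
From mathcomp Require Import all_classical all_reals all_analysis.
Set Implicit Arguments. Unset Strict Implicit. Unset Printing Implicit Defensive.
Import Order.TTheory GRing.Theory Num.Theory.
Local Open Scope ring_scope.

Section Defs.
Variable R : realType.

Definition dotv n (u v : 'cV[R]_n) : R := \sum_(i < n) u i 0 * v i 0.
Definition norm2 n (x : 'cV[R]_n) : R := Num.sqrt (dotv x x).
Definition norm1 n (x : 'cV[R]_n) : R := \sum_(i < n) `|x i 0|.

Definition inD n (d : R) (x : 'cV[R]_n) : Prop := norm2 x <= d.
Definition inC m (b : 'cV[R]_m) (eps : R) (y : 'cV[R]_m) : Prop := norm2 (y - b) <= eps.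

Definition interior_pt n (S : 'cV[R]_n -> Prop) (x : 'cV[R]_n) : Prop :=
  exists r : R, 0 < r /\ forall y, norm2 (y - x) < r -> S y.

Definition env m (b : 'cV[R]_m) (eps : R) (y : 'cV[R]_m) : R :=
  2^-1 * (Num.max 0 (norm2 (y - b) - eps)) ^+ 2.

Definition Phi m n (A : 'M[R]_(m, n)) (b : 'cV[R]_m) (eps d : R)
  (x : 'cV[R]_n) : \bar R :=
  if `[< x != 0 /\ inD d x /\ inC b eps (A *m x) >]
  then (norm1 x / norm2 x)%:E else +oo%E.

Definition Qlam m n (lam : R) (A : 'M[R]_(m, n)) (b : 'cV[R]_m) (eps d : R)
  (x : 'cV[R]_n) : \bar R :=
  if `[< x != 0 /\ inD d x >]
  then ((lam * norm1 x + env b eps (A *m x)) / norm2 x)%:E else +oo%E.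

Definition l1_iotaD n (d : R) (x : 'cV[R]_n) : \bar R :=
  if `[< inD d x >] then (norm1 x)%:E else +oo%E.

Definition iotaC_A m n (A : 'M[R]_(m, n)) (b : 'cV[R]_m) (eps : R)
  (x : 'cV[R]_n) : \bar R :=
  if `[< inC b eps (A *m x) >] then 0%E else +oo%E.

(* Frechet subdifferential: v \in hat-partial f (x), x \in dom f;
   the liminf condition written out with epsilon-delta *)
Definition frechet_subdiff n (f : 'cV[R]_n -> \bar R) (x v : 'cV[R]_n) : Prop :=
  f x \is a fin_num /\
  forall e : R, 0 < e -> exists delta : R, 0 < delta /\
    forall z, 0 < norm2 (z - x) < delta ->
      (f x + (dotv v (z - x) - e * norm2 (z - x))%:E <= f z)%E.

Definition stationary n (f : 'cV[R]_n -> \bar R) (x : 'cV[R]_n) : Prop :=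
  frechet_subdiff f x 0.

Definition convex_subdiff n (f : 'cV[R]_n -> \bar R) (x v : 'cV[R]_n) : Prop :=
  f x \is a fin_num /\ forall z, (f x + (dotv v (z - x))%:E <= f z)%E.

Definition is_grad n (f : 'cV[R]_n -> R) (x g : 'cV[R]_n) : Prop :=
  forall e : R, 0 < e -> exists delta : R, 0 < delta /\
    forall z, norm2 (z - x) < delta ->
      `|f z - f x - dotv g (z - x)| <= e * norm2 (z - x).

End Defs.

From mathcomp Require Import all_boot all_order all_algebra.
From mathcomp Require Import all_classical all_reals all_analysis.
From mathcomp Require Import ring lra.
Import Order.TTheory GRing.Theory Num.Theory.
Set Implicit Arguments. Unset Strict Implicit. Unset Printing Implicit Defensive.
Local Open Scope ring_scope.

(* Both extended objectives have the form F/||.||_2 on P minus the origin,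
   with F = ||.||_1 on P = D /\ {Ax in C} for (P), and
   F = lambda ||.||_1 + env o A on P = D for (P_lambda).  Three general
   facts about Fréchet subgradients of a real function restricted to a set
   reduce stationarity to convex subgradients:
   - quotient rule: at x <> 0, with g a gradient of ||.||_2, the vector 0 is
     a Fréchet subgradient of F/||.||_2 iff (F x / ||x||_2) g is one of F;
   - sum and positive-scaling rules with differentiable functions;
   - for convex F and convex P, Fréchet subgradients are global ones.
   For (P) the resulting subgradient of ||.||_1 on D /\ {Ax in C} is split
   into a subgradient on D plus a normal vector to {Ax in C}: a Lagrange
   multiplier for the convex constraint ||Ax - b||^2 <= eps^2 exists thanks
   to the Slater point given by the interiority hypothesis.  For (P_lambda)
   one also needs the gradient of env o A. *)

Section Euclid.
Variables (R : realType) (n : nat).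
Implicit Types u v w : 'cV[R]_n.

Lemma dotvC u v : dotv u v = dotv v u.
Proof. by apply: eq_bigr => i _; rewrite mulrC. Qed.

Lemma dotvDl u v w : dotv (u + v) w = dotv u w + dotv v w.
Proof. by rewrite /dotv -big_split; apply: eq_bigr => i _; rewrite mxE mulrDl. Qed.

Lemma dotvZl k u w : dotv (k *: u) w = k * dotv u w.
Proof. by rewrite /dotv mulr_sumr; apply: eq_bigr => i _; rewrite mxE mulrA. Qed.

Lemma dotvNl u w : dotv (- u) w = - dotv u w.
Proof. by rewrite -scaleN1r dotvZl mulN1r. Qed.

Lemma dotvBl u v w : dotv (u - v) w = dotv u w - dotv v w.
Proof. by rewrite dotvDl dotvNl. Qed.

Lemma dotv0l w : dotv 0 w = 0.
Proof. by rewrite -(scale0r 0) dotvZl mul0r. Qed.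

Lemma dotvDr u v w : dotv w (u + v) = dotv w u + dotv w v.
Proof. by rewrite dotvC dotvDl !(dotvC w). Qed.

Lemma dotvZr k u w : dotv w (k *: u) = k * dotv w u.
Proof. by rewrite dotvC dotvZl dotvC. Qed.

Lemma dotvNr u w : dotv w (- u) = - dotv w u.
Proof. by rewrite dotvC dotvNl dotvC. Qed.

Lemma dotvBr u v w : dotv w (u - v) = dotv w u - dotv w v.
Proof. by rewrite dotvC dotvBl !(dotvC w). Qed.

Lemma dotv0r w : dotv w 0 = 0.
Proof. by rewrite dotvC dotv0l. Qed.

Lemma dotv_ge0 u : 0 <= dotv u u.
Proof. by apply: sumr_ge0 => i _; rewrite -expr2 sqr_ge0. Qed.

Lemma dotv_eq0 u : dotv u u = 0 -> u = 0.
Proof.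
move=> /eqP; rewrite /dotv psumr_eq0; last by move=> i _; rewrite -expr2 sqr_ge0.
move=> /allP H; apply/matrixP => i j; rewrite (ord1 j) mxE.
by have := H i (mem_index_enum _); rewrite /= mulf_eq0 orbb => /eqP.
Qed.

Lemma norm2_sq u : norm2 u ^+ 2 = dotv u u.
Proof. by rewrite /norm2 sqr_sqrtr // dotv_ge0. Qed.

Lemma norm2_ge0 u : 0 <= norm2 u.
Proof. exact: sqrtr_ge0. Qed.

Lemma norm20 : norm2 (0 : 'cV[R]_n) = 0.
Proof. by rewrite /norm2 dotv0l sqrtr0. Qed.

Lemma norm2_gt0 u : u != 0 -> 0 < norm2 u.
Proof.
move=> u0; rewrite lt0r norm2_ge0 andbT; apply: contra u0 => /eqP N0.
by apply/eqP/dotv_eq0; rewrite -norm2_sq N0 expr0n.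
Qed.

Lemma cauchy_schwarz u v : dotv u v ^+ 2 <= dotv u u * dotv v v.
Proof.
have [Hv|Hv] := eqVneq (dotv v v) 0.
  by rewrite (dotv_eq0 Hv) !dotv0r expr0n /= mulr0.
have Bp : 0 < dotv v v by rewrite lt0r Hv dotv_ge0.
set t := dotv u v / dotv v v.
have E : dotv (u - t *: v) (u - t *: v) = dotv u u - dotv u v ^+ 2 / dotv v v.
  by rewrite !(dotvBl, dotvBr, dotvZl, dotvZr) (dotvC v u) /t; field.
by have := dotv_ge0 (u - t *: v); rewrite E subr_ge0 ler_pdivrMr.
Qed.

Lemma dotv_le u v : dotv u v <= norm2 u * norm2 v.
Proof.
apply: le_trans (ler_norm _) _.
rewrite -sqrtr_sqr /norm2 -sqrtrM ?dotv_ge0 // ler_sqrt ?cauchy_schwarz //.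
by rewrite mulr_ge0 ?dotv_ge0.
Qed.

Lemma norm2D u v : norm2 (u + v) <= norm2 u + norm2 v.
Proof.
rewrite -(ger0_norm (addr_ge0 (norm2_ge0 u) (norm2_ge0 v))) -sqrtr_sqr.
rewrite {1}/norm2 ler_sqrt ?sqr_ge0 // !(dotvDl, dotvDr) sqrrD !norm2_sq (dotvC v u).
have := dotv_le u v; lra.
Qed.

Lemma norm2Z k u : norm2 (k *: u) = `|k| * norm2 u.
Proof.
by rewrite /norm2 dotvZl dotvZr mulrA -expr2 sqrtrM ?sqr_ge0 // sqrtr_sqr.
Qed.

Lemma norm2N u : norm2 (- u) = norm2 u.
Proof. by rewrite -scaleN1r norm2Z normrN1 mul1r. Qed.

Lemma norm2B u v : norm2 (u - v) = norm2 (v - u).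
Proof. by rewrite -norm2N opprB. Qed.

Lemma norm2_lip u v : `|norm2 u - norm2 v| <= norm2 (u - v).
Proof.
rewrite ler_norml; apply/andP; split.
  by have := norm2D (v - u) u; rewrite subrK norm2B; lra.
by have := norm2D (u - v) v; rewrite subrK; lra.
Qed.

Lemma add_incr u v : u + (v - u) = v.
Proof. by rewrite addrC subrK. Qed.

End Euclid.

Section Gradients.
Variables (R : realType) (n : nat).
Implicit Types (x z g : 'cV[R]_n) (G : 'cV[R]_n -> R).

Lemma is_grad_quadratic G x g (K : R) : 0 <= K ->
  (forall z, `|G z - G x - dotv g (z - x)| <= K * norm2 (z - x) ^+ 2) ->
  is_grad G x g.
Proof.
move=> K0 H e e0; have K1 : 0 < K + 1 by rewrite ltr_wpDl.
exists (e / (K + 1)); split; first by rewrite divr_gt0.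
move=> z Hz; apply: le_trans (H z) _; have Nh := norm2_ge0 (z - x).
have : (K + 1) * norm2 (z - x) <= e by rewrite mulrC -ler_pdivlMr // ltW.
move=> /(ler_wpM2r Nh) h; rewrite expr2 mulrA; apply: le_trans h.
by rewrite ler_wpM2r // ler_wpM2r // lerDl.
Qed.

Lemma is_grad_affine G x g (k c : R) : is_grad G x g ->
  is_grad (fun z => k * G z + c) x (k *: g).
Proof.
move=> H e e0; have k1 : 0 < `|k| + 1 by rewrite ltr_wpDl.
have [delta [d0 Hd]] := H (e / (`|k| + 1)) (divr_gt0 e0 k1).
exists delta; split => // z Hz.
have -> : k * G z + c - (k * G x + c) - dotv (k *: g) (z - x)
    = k * (G z - G x - dotv g (z - x)) by rewrite dotvZl; ring.
rewrite normrM; apply: le_trans (ler_wpM2l (normr_ge0 k) (Hd z Hz)) _.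
rewrite !mulrA ler_wpM2r ?norm2_ge0 // ler_pdivrMr // mulrDr mulr1 mulrC lerDl.
exact: ltW.
Qed.

Lemma is_grad_norm2 x : x != 0 -> is_grad (@norm2 R n) x ((norm2 x)^-1 *: x).
Proof.
move=> x0; have Nx := norm2_gt0 x0.
apply: (@is_grad_quadratic _ _ _ (2 * norm2 x)^-1).
  by rewrite invr_ge0 mulr_ge0 // ltW.
move=> z; have [h ->] : exists h, z = x + h by exists (z - x); rewrite add_incr.
rewrite [x + h]addrC addrK [h + x]addrC.
have dx : dotv x h = (norm2 (x + h) ^+ 2 - norm2 x ^+ 2 - norm2 h ^+ 2) / 2.
  by rewrite !norm2_sq !(dotvDl, dotvDr) (dotvC h x); field.
have -> : norm2 (x + h) - norm2 x - dotv ((norm2 x)^-1 *: x) h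
    = (norm2 h ^+ 2 - (norm2 (x + h) - norm2 x) ^+ 2) / (2 * norm2 x).
  by rewrite dotvZl dx; field; rewrite gt_eqF.
have := norm2_lip (x + h) x.
rewrite (addrC x h) addrK (addrC h x) ler_norml => /andP [l1 l2].
have Nh := norm2_ge0 h.
have s1 : (norm2 (x + h) - norm2 x) ^+ 2 <= norm2 h ^+ 2 by nra.
rewrite ger0_norm; last by rewrite divr_ge0 ?subr_ge0 // mulr_ge0 // ltW.
rewrite [leRHS]mulrC; apply: ler_wpM2r; first by rewrite invr_ge0 mulr_ge0 // ltW.
by have := sqr_ge0 (norm2 (x + h) - norm2 x); lra.
Qed.

End Gradients.

Section FrechetCalculus.
Variables (R : realType) (n : nat).
Implicit Types (x z v g : 'cV[R]_n) (P : 'cV[R]_n -> Prop) (F G : 'cV[R]_n -> R).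

Definition frechet_on P F x v := forall e : R, 0 < e -> exists delta : R, 0 < delta /\
  forall z, P z -> 0 < norm2 (z - x) -> norm2 (z - x) < delta ->
    F x + (dotv v (z - x) - e * norm2 (z - x)) <= F z.

Definition subgrad_on P F x v := forall z, P z -> F x + dotv v (z - x) <= F z.

(* The extended-valued function equal to [F] on [P] and to +oo elsewhere;
   Phi, Q_lambda, ||.||_1 + iota_D and iota_C o A are all of this form. *)
Definition extend P F (z : 'cV[R]_n) : \bar R :=
  if `[< P z >] then (F z)%:E else +oo%E.

Lemma frechet_extend P F x v :
  frechet_subdiff (extend P F) x v <-> P x /\ frechet_on P F x v.
Proof.
rewrite /frechet_subdiff /extend; split.
  case: (asboolP (P x)) => [Px [_ H]|_ [//]]; split => // e e0.
  have [delta [d0 Hd]] := H e e0; exists delta; split => // z Pz z0 zd.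
  by move: (Hd z); rewrite z0 zd asboolT // -EFinD lee_fin => /(_ isT).
move=> [Px H]; rewrite asboolT //; split => // e e0.
have [delta [d0 Hd]] := H e e0; exists delta; split => // z /andP [z0 zd].
case: (asboolP (P z)) => Pz; last exact: leey.
by rewrite -EFinD lee_fin; apply: Hd.
Qed.

Lemma convex_extend P F x v :
  convex_subdiff (extend P F) x v <-> P x /\ subgrad_on P F x v.
Proof.
rewrite /convex_subdiff /extend; split.
  case: (asboolP (P x)) => [Px [_ H]|_ [//]]; split => // z Pz.
  by have := H z; rewrite asboolT // -EFinD lee_fin.
move=> [Px H]; rewrite asboolT //; split => // z.
case: (asboolP (P z)) => Pz; last exact: leey.
by rewrite -EFinD lee_fin; apply: H.
Qed.

(* Removing the origin from the domain does not change the Fréchet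
   subgradients at a point x <> 0, since it lies outside a ball around x. *)
Lemma frechet_on_nonzero P F x v : x != 0 ->
  frechet_on (fun z => z != 0 /\ P z) F x v <-> frechet_on P F x v.
Proof.
move=> x0; split => H e e0; have [delta [d0 Hd]] := H e e0; last first.
  by exists delta; split => // z [_ Pz]; apply: Hd.
exists (Num.min delta (norm2 x)); split; first by rewrite lt_min d0 norm2_gt0.
move=> z Pz z0; rewrite lt_min => /andP [zd zx]; apply: Hd => //; split => //.
by apply: contraTneq zx => ->; rewrite sub0r norm2N ltxx.
Qed.

Lemma frechet_on_congr P F G x v v' : (forall z, F z = G z) -> v = v' ->
  frechet_on P F x v -> frechet_on P G x v'.
Proof. by move=> /funext -> ->. Qed.

Lemma frechet_on_add_grad P F G x v g : frechet_on P F x v -> is_grad G x g ->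
  frechet_on P (fun z => F z + G z) x (v + g).
Proof.
move=> H HG e e0; have e20 : 0 < e / 2 by rewrite divr_gt0.
have [d1 [d10 Hd1]] := H _ e20; have [d2 [d20 Hd2]] := HG _ e20.
exists (Num.min d1 d2); split; first by rewrite lt_min d10 d20.
move=> z Pz z0; rewrite lt_min => /andP [zd1 zd2].
have h1 := Hd1 z Pz z0 zd1.
have := Hd2 z zd2; rewrite ler_norml => /andP [h2 _].
have -> : e * norm2 (z - x) = e / 2 * norm2 (z - x) + e / 2 * norm2 (z - x).
  by rewrite -mulrDl -splitr.
rewrite dotvDl; lra.
Qed.

Lemma frechet_on_scale P F x v k : 0 < k -> frechet_on P F x v ->
  frechet_on P (fun z => k * F z) x (k *: v).
Proof.
move=> k0 H e e0; have [delta [d0 Hd]] := H (e / k) (divr_gt0 e0 k0).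
exists delta; split => // z Pz z0 zd.
have := Hd z Pz z0 zd; rewrite -(ler_pM2l k0); apply: le_trans.
by rewrite dotvZl le_eqVlt; apply/orP; left; apply/eqP; field; rewrite gt_eqF.
Qed.

Lemma subgrad_frechet P F x v : subgrad_on P F x v -> frechet_on P F x v.
Proof.
move=> H e e0; exists 1; split => // z Pz _ _; apply: le_trans (H z Pz).
by rewrite lerD2l lerBlDr lerDl mulr_ge0 ?norm2_ge0 // ltW.
Qed.

Lemma frechet_on_rescale P F G x (w : 'cV[R]_n -> R) (r K : R) : 0 < r ->
  (forall z, norm2 (z - x) < r -> 0 < w z <= K /\ F z - F x = (G z - G x) * w z) ->
  frechet_on P G x 0 -> frechet_on P F x 0.
Proof.
move=> r0 Hw H e e0.
have K0 : 0 < K.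
  have := Hw x; rewrite subrr norm20 => /(_ r0) [/andP [w0 wK] _].
  exact: lt_le_trans wK.
have [delta [d0 Hd]] := H (e / K) (divr_gt0 e0 K0).
exists (Num.min delta r); split; first by rewrite lt_min d0 r0.
move=> z Pz z0; rewrite lt_min => /andP [zd zr].
have [/andP [w0 wK] E] := Hw z zr; have := Hd z Pz z0 zd; rewrite !dotv0l !sub0r.
set a := e / K * norm2 (z - x) => hG.
have a0 : 0 <= a by rewrite mulr_ge0 ?norm2_ge0 // ltW // divr_gt0.
have h1 : - a * w z <= (G z - G x) * w z by apply: ler_wpM2r; [exact: ltW | lra].
have h2 : a * w z <= a * K by rewrite ler_wpM2l.
have aK : a * K = e * norm2 (z - x) by rewrite /a; field; rewrite gt_eqF.
rewrite mulNr in h1; lra.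
Qed.

Lemma frechet_on_ratio P F x : x != 0 ->
  frechet_on P (fun z => F z / norm2 z) x 0 <->
  frechet_on P (fun z => F z - F x / norm2 x * norm2 z) x 0.
Proof.
move=> x0; have Nx := norm2_gt0 x0; have Nx2 : 0 < norm2 x / 2 by rewrite divr_gt0.
have near z : norm2 (z - x) < norm2 x / 2 -> norm2 x / 2 <= norm2 z <= 2 * norm2 x.
  move=> zx; have := norm2_lip z x; rewrite ler_norml => /andP [l1 l2].
  by apply/andP; split; lra.
split.
  apply: (frechet_on_rescale (w := @norm2 R n) (K := 2 * norm2 x) Nx2).
  move=> z /near /andP [z1 z2]; have Nz : 0 < norm2 z by apply: lt_le_trans z1.
  by rewrite Nz z2; split => //; field; rewrite !gt_eqF.
apply: (frechet_on_rescale (w := fun z => (norm2 z)^-1) (K := 2 / norm2 x) Nx2).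
move=> z /near /andP [z1 z2]; have Nz : 0 < norm2 z by apply: lt_le_trans z1.
split; last by field; rewrite !gt_eqF.
have -> : 2 / norm2 x = (norm2 x / 2)^-1 by rewrite invf_div.
by rewrite invr_gt0 Nz /= lef_pV2 ?posrE.
Qed.

Lemma frechet_on_ratio_grad P F x g : x != 0 -> is_grad (@norm2 R n) x g ->
  frechet_on P (fun z => F z / norm2 z) x 0 <->
  frechet_on P F x ((F x / norm2 x) *: g).
Proof.
move=> x0 Hg; rewrite frechet_on_ratio //; set c := F x / norm2 x; split => H.
  apply: (frechet_on_congr _ _ (frechet_on_add_grad H (is_grad_affine c 0 Hg))).
    by move=> z; ring.
  by rewrite add0r.
apply: (frechet_on_congr _ _ (frechet_on_add_grad H (is_grad_affine (- c) 0 Hg))).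
  by move=> z; ring.
by rewrite scaleNr subrr.
Qed.

Lemma stationary_ratio P F x :
  stationary (extend (fun z => z != 0 /\ P z) (fun z => F z / norm2 z)) x <->
  x != 0 /\ P x /\ frechet_on P (fun z => F z / norm2 z) x 0.
Proof.
rewrite /stationary frechet_extend.
split=> [[[x0 Px] /(frechet_on_nonzero _ _ _ x0) H]|[x0 [Px H]]] //.
by split; [split | apply/(frechet_on_nonzero _ _ _ x0)].
Qed.

Definition convex_set P := forall x z t, P x -> P z -> 0 <= t <= 1 ->
  P (x + t *: (z - x)).

Definition convex_fun F := forall x z t, 0 <= t <= 1 ->
  F (x + t *: (z - x)) <= (1 - t) * F x + t * F z.

(* For convex data a Fréchet subgradient is a global subgradient: compare F
   at z with F at the nearby points of the segment [x, z]. *)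
Lemma frechet_subgrad P F x v : convex_set P -> convex_fun F -> P x ->
  frechet_on P F x v -> subgrad_on P F x v.
Proof.
move=> cP cF Px H z Pz.
have [->|zx] := eqVneq z x; first by rewrite subrr dotv0r addr0.
have Nh : 0 < norm2 (z - x) by rewrite norm2_gt0 // subr_eq0.
apply/ler_addgt0Pr => e e0; have e10 : 0 < e / norm2 (z - x) by rewrite divr_gt0.
have [delta [d0 Hd]] := H _ e10.
set t := Num.min 1 (delta / (2 * norm2 (z - x))).
have t0 : 0 < t by rewrite lt_min ltr01 divr_gt0 // mulr_gt0.
have t01 : 0 <= t <= 1 by rewrite ltW //= ge_min lexx.
have td : t * norm2 (z - x) < delta.
  have : t <= delta / (2 * norm2 (z - x)) by rewrite ge_min lexx orbT.
  move=> /(ler_wpM2r (norm2_ge0 (z - x))).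
  have -> : delta / (2 * norm2 (z - x)) * norm2 (z - x) = delta / 2.
    by field; rewrite gt_eqF.
  lra.
have E : x + t *: (z - x) - x = t *: (z - x) by rewrite addrC addKr.
have := Hd _ (cP x z t Px Pz t01); rewrite E norm2Z ger0_norm ?(ltW t0) //.
move=> /(_ (mulr_gt0 t0 Nh) td); rewrite dotvZr => h.
have := le_trans h (cF x z t t01).
have -> : e / norm2 (z - x) * (t * norm2 (z - x)) = t * e by field; rewrite gt_eqF.
rewrite -mulrBr mulrBl mul1r => h2.
have : t * (dotv v (z - x) - e) <= t * (F z - F x) by rewrite mulrBr; lra.
by rewrite ler_pM2l //; lra.
Qed.

End FrechetCalculus.

Section LagrangeMultiplier.
(* The hypotheses below are applied to explicit points. *)
Local Unset Implicit Arguments.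
Variables (R : realType) (n : nat).
Variables (P : 'cV[R]_n -> Prop) (psi g : 'cV[R]_n -> R) (x : 'cV[R]_n).
Hypotheses (cP : convex_set P) (cpsi : convex_fun psi) (cg : convex_fun g).
Hypothesis x_opt : forall z, P z -> g z <= 0 -> psi x <= psi z.
Local Set Implicit Arguments.

(* Any infeasible point z and strictly feasible point z' bound the
   multiplier: the point of [z', z] on which g vanishes is feasible. *)
Lemma multiplier_bound z z' : P z -> P z' -> 0 < g z -> g z' < 0 ->
  (psi x - psi z) / g z <= (psi z' - psi x) / (- g z').
Proof.
move=> Pz Pz' gz gz'; set a := g z; set a' := - g z'.
have a'0 : 0 < a' by rewrite oppr_gt0.
have aa0 : 0 < a + a' by rewrite addr_gt0.
set l := a' / (a + a').
have l01 : 0 <= l <= 1.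
  by rewrite /l divr_ge0 ?(ltW a'0) ?(ltW aa0) //= ler_pdivrMr // mul1r lerDr ltW.
have g0 : (1 - l) * g z' + l * g z = 0.
  by rewrite /l -/a -[g z']opprK -/a'; field; rewrite gt_eqF.
have := x_opt _ (cP z' z l Pz' Pz l01); rewrite -g0 => /(_ (cg z' z l l01)).
move=> /le_trans /(_ (cpsi z' z l l01)) h.
have h3 : (a + a') * psi x <= a * psi z' + a' * psi z.
  have -> : a * psi z' + a' * psi z = (a + a') * ((1 - l) * psi z' + l * psi z).
    by rewrite /l; field; rewrite gt_eqF.
  by rewrite ler_pM2l.
rewrite ler_pdivrMr // mulrAC ler_pdivlMr //; move: h3; rewrite !mulrDl; lra.
Qed.

Lemma lagrange_multiplier x0 : P x0 -> g x0 < 0 ->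
  exists t, 0 <= t /\ forall z, P z -> psi x <= psi z + t * g z.
Proof.
move=> Px0 gx0.
have [[z1 [Pz1 gz1]]|none] := pselect (exists z, P z /\ 0 < g z); last first.
  exists 0; split => // z Pz; rewrite mul0r addr0; apply: x_opt => //.
  by rewrite leNgt; apply/negP => gz; apply: none; exists z.
pose L : set R := fun r => exists z, [/\ P z, 0 < g z & r = (psi x - psi z) / g z].
have ubL : ubound L ((psi x0 - psi x) / (- g x0)).
  by move=> r [z [Pz gz ->]]; apply: multiplier_bound.
have neL : (L !=set0)%classic by exists ((psi x - psi z1) / g z1), z1.
exists (Num.max 0 (sup L)); split; first by rewrite le_max lexx.
move=> z Pz; have [gz|gz] := ltP 0 (g z).
  have : (psi x - psi z) / g z <= Num.max 0 (sup L).
    rewrite le_max; apply/orP; right; apply: ub_le_sup; last by exists z.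
    by exists ((psi x0 - psi x) / (- g x0)).
  by rewrite ler_pdivrMr // => h; lra.
have [gz0|gz0] := eqVneq (g z) 0; first by rewrite gz0 mulr0 addr0 x_opt // gz0.
have gzn : 0 < - g z by rewrite oppr_gt0 lt_neqAle gz0 gz.
have : Num.max 0 (sup L) <= (psi z - psi x) / (- g z).
  rewrite ge_max divr_ge0 ?subr_ge0 ?(x_opt _ Pz gz) ?(ltW gzn) //=.
  apply: ge_sup => // r [z' [Pz' gz' ->]].
  by apply: multiplier_bound => //; rewrite lt_neqAle gz0 gz.
by rewrite ler_pdivlMr // mulrN => h; lra.
Qed.

End LagrangeMultiplier.

Section ConvexNorms.
Variables (R : realType) (n : nat).
Implicit Types x z : 'cV[R]_n.

Lemma norm1_convex : convex_fun (@norm1 R n).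
Proof.
move=> x z t /andP [t0 t1]; rewrite /norm1 !mulr_sumr -big_split /=.
apply: ler_sum => i _; rewrite !mxE.
have -> : x i 0 + t * (z i 0 - x i 0) = (1 - t) * x i 0 + t * z i 0 by ring.
apply: le_trans (ler_normD _ _) _.
by rewrite !normrM (ger0_norm t0) (@ger0_norm _ (1 - t)) ?subr_ge0.
Qed.

Lemma norm2_convex : convex_fun (@norm2 R n).
Proof.
move=> x z t /andP [t0 t1].
have -> : x + t *: (z - x) = (1 - t) *: x + t *: z.
  by apply/matrixP => i j; rewrite !mxE; ring.
apply: le_trans (norm2D _ _) _.
by rewrite !norm2Z (ger0_norm t0) (@ger0_norm _ (1 - t)) ?subr_ge0.
Qed.

Lemma inD_convex (d : R) : convex_set (@inD R n d).
Proof.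
move=> x z t Dx Dz t01; apply: le_trans (norm2_convex x z t01) _.
case/andP: t01 => t0 t1; rewrite /inD in Dx Dz.
have h1 : (1 - t) * norm2 x <= (1 - t) * d by rewrite ler_wpM2l // subr_ge0.
have h2 : t * norm2 z <= t * d by rewrite ler_wpM2l.
lra.
Qed.

Lemma frechet_on_l1_grad P (G : 'cV[R]_n -> R) (lam : R) x q h :
  convex_set P -> P x -> 0 < lam -> is_grad G x h ->
  frechet_on P (fun z => lam * norm1 z + G z) x q <->
  subgrad_on P (@norm1 R n) x (lam^-1 *: (q - h)).
Proof.
move=> cP Px lam0 Hh; split => H.
  apply: frechet_subgrad cP norm1_convex Px _.
  have ilam0 : 0 < lam^-1 by rewrite invr_gt0.
  have := frechet_on_scale ilam0 (frechet_on_add_grad H (is_grad_affine (-1) 0 Hh)).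
  apply: frechet_on_congr; last by rewrite scaleN1r.
  by move=> z; field; rewrite gt_eqF.
have := frechet_on_add_grad (frechet_on_scale lam0 (subgrad_frechet H)) Hh.
apply: frechet_on_congr => //.
by rewrite scalerA mulfV ?gt_eqF // scale1r subrK.
Qed.

End ConvexNorms.

Section LeastSquares.
Variables (R : realType) (m n : nat) (A : 'M[R]_(m, n)) (b : 'cV[R]_m).
Implicit Types x z h : 'cV[R]_n.

Definition resid2 x := dotv (A *m x - b) (A *m x - b).

Lemma inC_resid2 eps x : 0 <= eps -> inC b eps (A *m x) <-> resid2 x <= eps ^+ 2.
Proof. by move=> e0; rewrite /inC /resid2 -norm2_sq ler_sqr ?nnegrE ?norm2_ge0. Qed.

Lemma resid2_incr x h :
  resid2 (x + h) = resid2 x + 2 * dotv (A *m x - b) (A *m h) + dotv (A *m h) (A *m h).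
Proof.
rewrite /resid2 mulmxDr addrAC; move: (A *m x - b) (A *m h) => u w.
by rewrite !(dotvDl, dotvDr) (dotvC w u); ring.
Qed.

Lemma resid2_linear_le x z :
  resid2 x + 2 * dotv (A *m x - b) (A *m (z - x)) <= resid2 z.
Proof. by have := resid2_incr x (z - x); rewrite add_incr => ->; rewrite lerDl dotv_ge0. Qed.

Lemma resid2_convex : convex_fun resid2.
Proof.
move=> x z t /andP [t0 t1]; have := resid2_incr x (z - x).
rewrite add_incr => ->; set h := z - x; rewrite !resid2_incr -scalemxAr !(dotvZl, dotvZr).
have : 0 <= t * (1 - t) * dotv (A *m h) (A *m h).
  by rewrite mulr_ge0 ?dotv_ge0 // mulr_ge0 // subr_ge0.
lra.
Qed.

Lemma inC_convex eps : 0 <= eps -> convex_set (fun x => inC b eps (A *m x)).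
Proof.
move=> e0 x z t; rewrite !inC_resid2 // => Cx Cz t01.
apply: le_trans (resid2_convex x z t01) _; case/andP: t01 => t0 t1.
have h1 : (1 - t) * resid2 x <= (1 - t) * eps ^+ 2 by rewrite ler_wpM2l // subr_ge0.
have h2 : t * resid2 z <= t * eps ^+ 2 by rewrite ler_wpM2l.
lra.
Qed.

Lemma dotv_adjoint (w : 'cV[R]_m) h : dotv w (A *m h) = dotv (A^T *m w) h.
Proof.
rewrite /dotv.
transitivity (\sum_(i < m) \sum_(j < n) w i 0 * (A i j * h j 0)).
  by apply: eq_bigr => i _; rewrite mxE mulr_sumr.
rewrite exchange_big; apply: eq_bigr => j _; rewrite mxE mulr_suml.
by apply: eq_bigr => i _; rewrite !mxE; ring.
Qed.

(* A is a bounded operator (the bound is the squared Frobenius norm). *)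
Lemma mulmx_bounded : exists M : R, 0 <= M /\
  forall h, norm2 (A *m h) ^+ 2 <= M * norm2 h ^+ 2.
Proof.
exists (\sum_(i < m) dotv (row i A)^T (row i A)^T); split.
  by apply: sumr_ge0 => i _; apply: dotv_ge0.
move=> h; rewrite !norm2_sq {1}/dotv mulr_suml; apply: ler_sum => i _.
have -> : (A *m h) i 0 = dotv (row i A)^T h.
  by rewrite mxE /dotv; apply: eq_bigr => j _; rewrite !mxE.
by rewrite -expr2; apply: cauchy_schwarz.
Qed.

Lemma is_grad_resid2 x : is_grad resid2 x (2 *: (A^T *m (A *m x - b))).
Proof.
have [M [M0 HM]] := mulmx_bounded; apply: (is_grad_quadratic M0) => z.
have [h ->] : exists h, z = x + h by exists (z - x); rewrite add_incr.
rewrite (addrC x h) addrK (addrC h x) resid2_incr dotvZl -dotv_adjoint.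
have -> : resid2 x + 2 * dotv (A *m x - b) (A *m h) + dotv (A *m h) (A *m h)
    - resid2 x - 2 * dotv (A *m x - b) (A *m h) = dotv (A *m h) (A *m h) by ring.
by rewrite ger0_norm ?dotv_ge0 // -norm2_sq.
Qed.

Lemma mulmx_ball_eq0 (r : R) : 0 < r ->
  (forall h, norm2 h < r -> A *m h = 0) -> forall h, A *m h = 0.
Proof.
move=> r0 Hr y; set k := r / (2 * (norm2 y + 1)).
have Ny := norm2_ge0 y; have Ny1 : 0 < norm2 y + 1 by rewrite ltr_wpDl.
have k0 : 0 < k by rewrite divr_gt0 // mulr_gt0.
suff /eqP : A *m (k *: y) = 0 by rewrite -scalemxAr scaler_eq0 gt_eqF //= => /eqP.
apply: Hr; rewrite norm2Z ger0_norm ?ltW //.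
have -> : k * norm2 y = r / 2 * (norm2 y / (norm2 y + 1)) by rewrite /k; field; rewrite gt_eqF.
have : norm2 y / (norm2 y + 1) <= 1 by rewrite ler_pdivrMr ?mul1r ?lerDl.
have r20 : 0 < r / 2 by rewrite divr_gt0.
move=> /(ler_wpM2l (ltW r20)); rewrite mulr1; lra.
Qed.

(* Slater: an interior point of {Ax in C} is strictly feasible, because
   0 is not feasible (eps < ||b||_2) and so A cannot vanish. *)
Lemma interior_resid2_lt eps x0 : 0 <= eps -> eps < norm2 b ->
  interior_pt (fun x => inC b eps (A *m x)) x0 -> resid2 x0 < eps ^+ 2.
Proof.
move=> e0 eb [r [r0 H]].
have Cx0 : resid2 x0 <= eps ^+ 2 by rewrite -inC_resid2 //; apply: H; rewrite subrr norm20.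
rewrite lt_neqAle Cx0 andbT; apply/eqP => Ex0.
have Ah0 : forall h, norm2 h < r -> A *m h = 0.
  move=> h Hh.
  have h1 : resid2 (x0 + h) <= eps ^+ 2.
    by rewrite -inC_resid2 //; apply: H; rewrite addrC addKr.
  have h2 : resid2 (x0 + - h) <= eps ^+ 2.
    by rewrite -inC_resid2 //; apply: H; rewrite addrC addKr norm2N.
  move: h1 h2; rewrite !resid2_incr mulmxN !(dotvNl, dotvNr) opprK Ex0 => h1 h2.
  by apply: dotv_eq0; apply/eqP; rewrite eq_le dotv_ge0 andbT; lra.
move: Ex0; rewrite /resid2 (mulmx_ball_eq0 r0 Ah0) sub0r dotvNl dotvNr opprK -norm2_sq.
by move=> E; move: eb; rewrite -ltr_sqr ?nnegrE ?norm2_ge0 // E ltxx.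
Qed.

End LeastSquares.

Section Envelope.
Variables (R : realType) (m : nat) (eps : R).
Hypothesis eps_ge0 : 0 <= eps.
Implicit Types u w : 'cV[R]_m.

(* The envelope as a function of the residual u = y - b. *)
Definition env_r u : R := 2^-1 * Num.max 0 (norm2 u - eps) ^+ 2.

(* Outside the ball, the gradient of env_r at u is (1 - eps/||u||_2) u. *)
Definition env_grad u : 'cV[R]_m := ((norm2 u - eps) / norm2 u) *: u.

Lemma env_lower u w : eps < norm2 u ->
  env_r u + dotv (env_grad u) (w - u) <= env_r w.
Proof.
move=> Hu; have Nu : 0 < norm2 u by apply: le_lt_trans Hu.
have Ha : Num.max 0 (norm2 u - eps) = norm2 u - eps by rewrite max_r // subr_ge0 ltW.
rewrite /env_r /env_grad Ha dotvZl dotvBr -(norm2_sq u).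
set a := norm2 u - eps; set c := norm2 w - eps.
have a0 : 0 < a by rewrite subr_gt0.
have h1 : a / norm2 u * (dotv u w - norm2 u ^+ 2) <= a * (c - a).
  have -> : a * (c - a) = a / norm2 u * (norm2 u * norm2 w - norm2 u ^+ 2).
    by rewrite /c /a; field; rewrite gt_eqF.
  by apply: ler_wpM2l; [rewrite divr_ge0 ?ltW | rewrite lerD2r dotv_le].
have h2 : a * c - 2^-1 * a ^+ 2 <= 2^-1 * Num.max 0 c ^+ 2.
  have [c0|c0] := leP 0 c; first by have := sqr_ge0 (c - a); rewrite sqrrB; lra.
  rewrite expr0n /= mulr0; have : a * c < 0 by rewrite pmulr_rlt0.
  by have := sqr_ge0 a; lra.
lra.
Qed.

(* The positive part (||w||_2 - eps)_+ is at most the distance from w to any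
   point of the sphere of radius eps, here the one on the ray through u. *)
Lemma env_upper u w : eps < norm2 u ->
  env_r w <= env_r u + dotv (env_grad u) (w - u) + 2^-1 * norm2 (w - u) ^+ 2.
Proof.
move=> Hu; have Nu : 0 < norm2 u by apply: le_lt_trans Hu.
have eu : 0 <= eps / norm2 u by rewrite divr_ge0 // ltW.
have h1 : Num.max 0 (norm2 w - eps) <= norm2 (w - (eps / norm2 u) *: u).
  rewrite ge_max norm2_ge0 /=.
  have := norm2D (w - (eps / norm2 u) *: u) ((eps / norm2 u) *: u).
  rewrite subrK norm2Z (ger0_norm eu) mulfVK ?gt_eqF //; lra.
have : Num.max 0 (norm2 w - eps) ^+ 2 <= norm2 (w - (eps / norm2 u) *: u) ^+ 2.
  by rewrite ler_sqr ?nnegrE ?norm2_ge0 ?le_max ?lexx.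
have -> : w - (eps / norm2 u) *: u = env_grad u + (w - u).
  by apply/matrixP => i j; rewrite !mxE; field; rewrite gt_eqF.
have Ha : Num.max 0 (norm2 u - eps) = norm2 u - eps by rewrite max_r // subr_ge0 ltW.
rewrite /env_r /env_grad Ha norm2_sq; move: (w - u) => h.
rewrite !(dotvDl, dotvDr, dotvZl, dotvZr) (dotvC h u) -(norm2_sq u) -(norm2_sq h).
have -> : (norm2 u - eps) / norm2 u * ((norm2 u - eps) / norm2 u * norm2 u ^+ 2)
   = (norm2 u - eps) ^+ 2 by field; rewrite gt_eqF.
lra.
Qed.

Lemma env_r_expansion u : exists G, forall w,
  0 <= env_r w - env_r u - dotv G (w - u) <= 2^-1 * norm2 (w - u) ^+ 2.
Proof.
have [Hu|Hu] := leP (norm2 u) eps.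
  exists 0 => w; rewrite dotv0l subr0.
  have -> : env_r u = 0 by rewrite /env_r max_l ?subr_le0 // expr0n /= mulr0.
  rewrite subr0 mulr_ge0 ?sqr_ge0 ?invr_ge0 //= ler_wpM2l ?invr_ge0 //.
  rewrite ler_sqr ?nnegrE ?norm2_ge0 ?le_max ?lexx // ge_max norm2_ge0 /=.
  by have := norm2D (w - u) u; rewrite subrK; lra.
exists (env_grad u) => w; have := env_lower w Hu; have := env_upper w Hu.
by move=> h1 h2; apply/andP; split; lra.
Qed.

Lemma is_grad_env_comp n (A : 'M[R]_(m, n)) (b : 'cV[R]_m) x :
  exists g, is_grad (fun z => env b eps (A *m z)) x g.
Proof.
have [M [M0 HM]] := mulmx_bounded A; have [G HG] := env_r_expansion (A *m x - b).
exists (A^T *m G); have M20 : 0 <= 2^-1 * M by rewrite mulr_ge0 // invr_ge0.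
apply: (is_grad_quadratic M20) => z; rewrite -dotv_adjoint.
have := HG (A *m z - b); rewrite opprB addrA subrK -mulmxBr => /andP [h1 h2].
rewrite ger0_norm //; apply: le_trans h2 _.
by rewrite -mulrA ler_wpM2l ?invr_ge0.
Qed.

End Envelope.

Section Stationarity.
Variables (R : realType) (m n : nat) (A : 'M[R]_(m, n)) (b : 'cV[R]_m) (eps d : R).
Hypotheses (eps_ge0 : 0 <= eps) (eps_lt_b : eps < norm2 b).
Implicit Types x z u : 'cV[R]_n.

Definition inCA z := inC b eps (A *m z).
Definition inDC z := inD d z /\ inCA z.

Lemma Phi_extend :
  Phi A b eps d = extend (fun z => z != 0 /\ inDC z) (fun z => norm1 z / norm2 z).
Proof. by []. Qed.

Lemma Qlam_extend lam : Qlam lam A b eps d = extend (fun z => z != 0 /\ inD d z)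
  (fun z => (lam * norm1 z + env b eps (A *m z)) / norm2 z).
Proof. by []. Qed.

Lemma l1_iotaD_extend : l1_iotaD d = extend (@inD R n d) (@norm1 R n).
Proof. by []. Qed.

Lemma iotaC_A_extend : iotaC_A A b eps = extend inCA (fun => 0).
Proof. by []. Qed.

Lemma inCA_neq0 z : inCA z -> z != 0.
Proof.
move=> Cz; apply/eqP => z0; move: Cz.
by rewrite /inCA /inC z0 mulmx0 sub0r norm2N leNgt eps_lt_b.
Qed.

Lemma inDC_convex : convex_set inDC.
Proof.
move=> x z t [Dx Cx] [Dz Cz] t01.
by split; [apply: inD_convex | apply: inC_convex].
Qed.

Lemma interior_mem (S : 'cV[R]_n -> Prop) x : interior_pt S x -> S x.
Proof. by move=> [r [r0 H]]; apply: H; rewrite subrr norm20. Qed.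

Lemma constraint_multiplier x0 xs u :
  interior_pt (@inD R n d) x0 -> interior_pt inCA x0 -> inDC xs ->
  subgrad_on inDC (@norm1 R n) xs u ->
  exists t, [/\ 0 <= t, t * (resid2 A b xs - eps ^+ 2) = 0 &
    subgrad_on (@inD R n d) (fun z => norm1 z + t * (resid2 A b z - eps ^+ 2)) xs u].
Proof.
move=> /interior_mem Dx0 /(interior_resid2_lt eps_ge0 eps_lt_b) Cx0 [Dx Cx] Hu.
pose psi z := norm1 z - dotv u z; pose gf z := resid2 A b z - eps ^+ 2.
have cpsi : convex_fun psi.
  move=> x z t t01; have := norm1_convex x z t01.
  by rewrite /psi !(dotvDr, dotvZr, dotvNr); lra.
have cgf : convex_fun gf.
  by move=> x z t t01; have := resid2_convex A b x z t01; rewrite /gf; lra.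
have opt z : inD d z -> gf z <= 0 -> psi xs <= psi z.
  rewrite /gf subr_le0 -inC_resid2 // => Dz Cz.
  by have := Hu z (conj Dz Cz); rewrite /psi dotvBr; lra.
have [|t [t0 Ht]] := lagrange_multiplier (@inD_convex R n d) cpsi cgf opt Dx0.
  by rewrite /gf subr_lt0.
have gxs : gf xs <= 0 by rewrite /gf subr_le0 -inC_resid2.
have tg0 : t * gf xs = 0.
  apply/eqP; rewrite eq_le mulr_ge0_le0 //=.
  by have := Ht xs Dx; lra.
exists t; split => // z Dz; have := Ht z Dz; rewrite /psi /gf dotvBr.
by move: tg0; rewrite /gf; lra.
Qed.

Lemma multiplier_normal xs t : 0 <= t -> t * (resid2 A b xs - eps ^+ 2) = 0 ->
  subgrad_on inCA (fun => 0) xs (t *: (2 *: (A^T *m (A *m xs - b)))).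
Proof.
move=> t0 tg0 z Cz; rewrite add0r !dotvZl -dotv_adjoint mulrA.
have := resid2_linear_le A b xs z; move: Cz; rewrite /inCA inC_resid2 // => Cz lin.
have : t * (2 * dotv (A *m xs - b) (A *m (z - xs))) <= t * (resid2 A b z - eps ^+ 2).
  have : t * (2 * dotv (A *m xs - b) (A *m (z - xs))) <= t * (resid2 A b z - resid2 A b xs).
    by apply: (ler_wpM2l t0); lra.
  by move: tg0; rewrite !mulrBr; lra.
by rewrite mulrA => /le_trans; apply; rewrite mulr_ge0_le0 // subr_le0.
Qed.

(* The multiplier term is removed through its gradient, and
   the resulting local subgradient is global by convexity. *)
Lemma subgrad_split x0 xs u :
  interior_pt (@inD R n d) x0 -> interior_pt inCA x0 -> inDC xs ->
  subgrad_on inDC (@norm1 R n) xs u ->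
  exists w, subgrad_on (@inD R n d) (@norm1 R n) xs (u - w) /\
            subgrad_on inCA (fun => 0) xs w.
Proof.
move=> ID IC [Dx Cx] Hu; have [t [t0 tg0 Ht]] := constraint_multiplier ID IC (conj Dx Cx) Hu.
set w := t *: (2 *: (A^T *m (A *m xs - b))); exists w; split; last exact: multiplier_normal.
apply: frechet_subgrad (@inD_convex R n d) (@norm1_convex R n) Dx _.
have Hg := is_grad_affine (- t) (t * eps ^+ 2) (is_grad_resid2 A b xs).
apply: (frechet_on_congr _ _ (frechet_on_add_grad (subgrad_frechet Ht) Hg)).
  by move=> z; ring.
by rewrite scaleNr.
Qed.

Lemma stationary_Phi x0 xs :
  interior_pt (@inD R n d) x0 -> interior_pt inCA x0 ->
  stationary (Phi A b eps d) xs <->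
  inD d xs /\ inCA xs /\
  exists v g w, convex_subdiff (l1_iotaD d) xs v /\ is_grad (@norm2 R n) xs g /\
    convex_subdiff (iotaC_A A b eps) xs w /\ v - (norm1 xs / norm2 xs) *: g + w = 0.
Proof.
move=> ID IC; rewrite Phi_extend stationary_ratio l1_iotaD_extend iotaC_A_extend.
set c := norm1 xs / norm2 xs; split.
  move=> [nz [[Dx Cx] H]]; have Hg := is_grad_norm2 nz; set g := _ *: xs in Hg.
  have /(frechet_subgrad inDC_convex (@norm1_convex R n) (conj Dx Cx)) Hu :=
    (frechet_on_ratio_grad _ _ nz Hg).1 H.
  have [w [Hv Hw]] := subgrad_split ID IC (conj Dx Cx) Hu.
  do 2!split=> //; exists (c *: g - w), g, w.
  split; first by apply/convex_extend.
  split=> //; split; first by apply/convex_extend.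
  by rewrite addrAC subrK subrr.
move=> [Dx [Cx [v [g [w [/convex_extend [_ Hv] [Hg [/convex_extend [_ Hw] E]]]]]]]].
have nz := inCA_neq0 Cx; do 2!split=> //; apply/(frechet_on_ratio_grad _ _ nz Hg).
have -> : c *: g = v + w by apply/eqP; rewrite eq_sym -subr_eq0 -E addrAC.
apply: subgrad_frechet => z [Dz Cz]; rewrite dotvDl.
by have := Hv z Dz; have := Hw z Cz; lra.
Qed.

Lemma stationary_Qlam lam xs : 0 < lam ->
  stationary (Qlam lam A b eps d) xs <->
  xs != 0 /\ inD d xs /\
  exists v g h, convex_subdiff (l1_iotaD d) xs v /\ is_grad (@norm2 R n) xs g /\
    is_grad (fun x => env b eps (A *m x)) xs h /\
    lam *: v - fine (Qlam lam A b eps d xs) *: g + h = 0.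
Proof.
move=> lam0; rewrite Qlam_extend stationary_ratio l1_iotaD_extend.
set F := fun z => lam * norm1 z + env b eps (A *m z).
have [h Hh] := is_grad_env_comp eps_ge0 A b xs.
split=> [[nz [Dx H]]|[nz [Dx [v [g [h' [/convex_extend [_ Hv] [Hg [Hh' E]]]]]]]]].
  have Hg := is_grad_norm2 nz; set g := _ *: xs in Hg.
  move: H => /(frechet_on_ratio_grad _ _ nz Hg).
  move=> /(frechet_on_l1_grad _ (@inD_convex R n d) Dx lam0 Hh) Hv.
  do 2!split=> //; exists (lam^-1 *: ((F xs / norm2 xs) *: g - h)), g, h.
  split; first by apply/convex_extend.
  do 2!split=> //; rewrite /extend asboolT // scalerA mulfV ?gt_eqF // scale1r.
  by rewrite addrAC subrK subrr.
move: E; rewrite /extend asboolT //= => E.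
do 2!split=> //; apply/(frechet_on_ratio_grad _ _ nz Hg).
apply: (iffRL (frechet_on_l1_grad _ (@inD_convex R n d) Dx lam0 Hh')).
have -> : (F xs / norm2 xs) *: g - h' = lam *: v.
  by apply/eqP; rewrite eq_sym -subr_eq0 -E /F opprB addrA addrAC.
by rewrite scalerA mulVf ?gt_eqF // scale1r.
Qed.

End Stationarity.

Theorem mainTheorem4 (R : realType) (m n : nat) (A : 'M[R]_(m, n))
  (b : 'cV[R]_m) (eps d : R) :
  0 <= eps -> eps < norm2 b -> 0 < d ->
  (exists x0 : 'cV[R]_n,
      interior_pt (fun x => inD d x) x0 /\
      interior_pt (fun x => inC b eps (A *m x)) x0) ->
  (forall xs : 'cV[R]_n,
      stationary (Phi A b eps d) xs <->
      (inD d xs /\ inC b eps (A *m xs) /\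
       exists v g w : 'cV[R]_n,
         convex_subdiff (l1_iotaD d) xs v /\
         is_grad (@norm2 R n) xs g /\
         convex_subdiff (iotaC_A A b eps) xs w /\
         v - (norm1 xs / norm2 xs) *: g + w = 0)) /\
  (forall lam : R, 0 < lam -> forall xs : 'cV[R]_n,
      stationary (Qlam lam A b eps d) xs <->
      (xs != 0 /\ inD d xs /\
       exists v g h : 'cV[R]_n,
         convex_subdiff (l1_iotaD d) xs v /\
         is_grad (@norm2 R n) xs g /\
         is_grad (fun x => env b eps (A *m x)) xs h /\
         lam *: v - fine (Qlam lam A b eps d xs) *: g + h = 0)).
Proof.
move=> eps_ge0 eps_lt_b _ [x0 [ID IC]]; split=> [xs | lam lam0 xs].
  exact: stationary_Phi ID IC.
exact: stationary_Qlam.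
Qed.
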